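(* Let $\mathbf{x}=(\mathbf{x}_1,\mathbf{x}_2,\mathbf{x}_3)$ have i.i.d. Bernoulli$(0.5)$ coordinates, and let $\mathbf{y}$ be distributed as follows: if $\mathbf{x}_3=1$, $\mathbf{y}=\mathbf{x}_1$ with probability $0.9$ and $\mathbf{y}=1-\mathbf{x}_1$ otherwise; if $\mathbf{x}_3=0$, $\mathbf{y}=\mathbf{x}_2$ with probability $0.9$ and $\mathbf{y}=1-\mathbf{x}_2$ otherwise. Let $e_{\mathrm{encode}}(\mathbf{x})=\xi_1=[1,0,0]$ if $\mathbf{x}_3=1$ and $e_{\mathrm{encode}}(\mathbf{x})=\xi_2=[0,1,0]$ otherwise. Then ROAR and FRESH both assign their respective optimal scores to $e_{\mathrm{encode}}$; that is, $\mathbf{y}$ is independent of $\mathbf{x}_{-e_{\mathrm{encode}}(\mathbf{x})}$, and $q(\mathbf{y}\mid \mathrm{val}(\mathbf{x}_{e_{\mathrm{encode}}(\mathbf{x})}))=q(\mathbf{y}\mid\mathbf{x})$ almost surely.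
   Context: An explanation is a map $e:\{0,1\}^3\to\{0,1\}^3$ selecting coordinates; the explanation $\mathbf{x}_{e(\mathbf{x})}=(\mathbf{v},\mathbf{a})$ consists of the selection $\mathbf{v}=e(\mathbf{x})$ and the values $\mathbf{a}$ of the selected coordinates. $\mathbf{x}_{-e(\mathbf{x})}$ denotes the pair of the complementary mask $\mathbf{1}-e(\mathbf{x})$ and the values of the unselected coordinates. ROAR scores an explanation by how poorly $\mathbf{x}_{-e(\mathbf{x})}$ predicts $\mathbf{y}$, and assigns its optimal score exactly when $\mathbf{y}$ is independent of $\mathbf{x}_{-e(\mathbf{x})}$. $\mathrm{val}(\mathbf{x}_{e(\mathbf{x})})$ is the vector in which the selected values $\mathbf{a}$ are placed in order in the first $\sum_i\mathbf{v}_i$ positions and the remaining positions are filled with a padding token (so the positions of the selected coordinates are dropped). FRESH scores an explanation by how well $\mathrm{val}(\mathbf{x}_{e(\mathbf{x})})$ predicts $\mathbf{y}$, and assigns its optimal score when this prediction is as good as that of $q(\mathbf{y}\mid\mathbf{x})$, i.e. $q(\mathbf{y}\mid\mathrm{val}(\mathbf{x}_{e(\mathbf{x})}))=q(\mathbf{y}\mid\mathbf{x})$. *)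

From mathcomp Require Import all_boot all_order all_algebra.
Set Implicit Arguments. Unset Strict Implicit. Unset Printing Implicit Defensive.
Import Order.TTheory GRing.Theory Num.Theory.
Local Open Scope ring_scope.

(* inputs x in {0,1}^3 (coordinates indexed 0,1,2 = paper's 1,2,3), labels y in {0,1} *)
Definition inp := {ffun 'I_3 -> bool}.
Definition mask := {ffun 'I_3 -> bool}.
(* a "masked vector": Some value at the listed coordinates, None elsewhere/padding *)
Definition pvec := {ffun 'I_3 -> option bool}.


Definition Pr {R : numDomainType} (p : inp * bool -> R) (A : pred (inp * bool)) : R :=
  \sum_(w : inp * bool | A w) p w.

Definition bern_half {R : numFieldType} (b : bool) : R := 1 / 2.
Definition pjoint {R : numFieldType} (w : inp * bool) : R :=
  let x := w.1 in let y := w.2 in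
  bern_half (x ord0) * bern_half (x (inord 1)) * bern_half (x (inord 2)) *
  (let src := if x (inord 2) then x ord0 else x (inord 1) in
   if y == src then 9 / 10 else 1 / 10).

Definition xi1 : mask := [ffun i : 'I_3 => val i == 0%N].
Definition xi2 : mask := [ffun i : 'I_3 => val i == 1%N].
Definition e_encode (x : inp) : mask := if x (inord 2) then xi1 else xi2.

Definition restrict (v : mask) (x : inp) : pvec :=
  [ffun i => if v i then Some (x i) else None].
Definition maskC (v : mask) : mask := [ffun i => ~~ v i].

(* x_{e(x)} = (v, a) and x_{-e(x)} = (1 - v, values of unselected coordinates) *)
Definition expl (e : inp -> mask) (x : inp) : mask * pvec :=
  (e x, restrict (e x) x).
Definition expl_compl (e : inp -> mask) (x : inp) : mask * pvec :=
  (maskC (e x), restrict (maskC (e x)) x).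

(* val(x_{e(x)}): selected values in order in the first positions, padding (None) after *)
Definition valE (va : mask * pvec) : pvec :=
  let s := [seq va.2 i | i <- enum 'I_3 & va.1 i] in
  [ffun i : 'I_3 => nth None s i].

Definition indep_y {R : numDomainType} {T : eqType} (p : inp * bool -> R)
  (f : inp -> T) : Prop :=
  forall (t : T) (b : bool),
    Pr p (fun w => (f w.1 == t) && (w.2 == b))
    = Pr p (fun w => f w.1 == t) * Pr p (fun w => w.2 == b).

Definition cond_y {R : numFieldType} {T : eqType} (p : inp * bool -> R)
  (g : inp -> T) (x0 : inp) (b : bool) : R :=
  Pr p (fun w => (g w.1 == g x0) && (w.2 == b)) / Pr p (fun w => g w.1 == g x0).

From mathcomp Require Import all_boot all_order all_algebra.
From mathcomp Require Import ring lra.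
Set Implicit Arguments. Unset Strict Implicit. Unset Printing Implicit Defensive.
Import Order.TTheory GRing.Theory Num.Theory.
Local Open Scope ring_scope.

(* The label y depends on x only through the source bit [src x] (x_1 if x_3,
   else x_2), passed through a binary symmetric channel.  The complement
   x_{-e(x)} reveals x_3 and the non-source coordinate only: flipping the
   source bit is a measure-preserving involution that fixes it and negates
   [src x], so the source bit, hence y, is independent of x_{-e(x)}.  The
   first entry of val(x_{e(x)}) is [src x], and conditioning on any
   statistic that determines [src x] leaves the law of y equal to the
   channel output at [src x], as does conditioning on x itself. *)

Lemma Pr_le (R : numDomainType) (p : inp * bool -> R) (A B : pred (inp * bool)) :
  (forall w, 0 <= p w) -> (forall w, A w -> B w) -> Pr p A <= Pr p B.
Proof.
move=> p_ge0 AB; rewrite /Pr [leLHS]big_mkcond [leRHS]big_mkcond.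
apply: ler_sum => w _; case: (boolP (A w)) => [/AB -> //|_].
by case: ifP.
Qed.

Section Channel.

Variables (R : numFieldType) (mu : inp -> R) (s : inp -> bool).
Variables (kappa : bool -> bool -> R) (p : inp * bool -> R).
Hypothesis pE : forall x y, p (x, y) = mu x * kappa (s x) y.
Hypothesis kappa1 : forall z, kappa z true + kappa z false = 1.

Lemma Pr_fst_snd (A : pred inp) (b : bool) :
  Pr p (fun w => A w.1 && (w.2 == b)) = \sum_(x | A x) mu x * kappa (s x) b.
Proof.
rewrite /Pr (eq_bigr (fun w => p (w.1, w.2))) => [|[] //].
rewrite -(pair_big_dep A (fun _ y => y == b) (fun x y => p (x, y))).
by apply: eq_bigr => x _; rewrite big_pred1_eq pE.
Qed.

Lemma Pr_fst (A : pred inp) : Pr p (fun w => A w.1) = \sum_(x | A x) mu x.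
Proof.
rewrite /Pr (eq_bigr (fun w => p (w.1, w.2))) => [|[] //].
rewrite (eq_bigl (fun w => A w.1 && predT w.2)) => [|w]; last by rewrite andbT.
rewrite -(pair_big_dep A (fun _ => predT) (fun x y => p (x, y))).
by apply: eq_bigr => x _; rewrite big_bool /= !pE -mulrDr kappa1 mulr1.
Qed.

Lemma cond_y_channel (T : eqType) (g : inp -> T) (x0 : inp) (b : bool) :
  (forall x, g x = g x0 -> s x = s x0) ->
  Pr p (fun w => g w.1 == g x0) != 0 ->
  cond_y p g x0 b = kappa (s x0) b.
Proof.
move=> g_s; rewrite /cond_y (Pr_fst_snd (fun x => g x == g x0)).
rewrite (Pr_fst (fun x => g x == g x0)) => nz.
rewrite (eq_bigr (fun x => mu x * kappa (s x0) b)) => [|x /eqP/g_s -> //].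
by rewrite -mulr_suml mulrAC mulfV // mul1r.
Qed.

Section SourceFlip.

Variable phi : inp -> inp.
Hypotheses (phiK : involutive phi) (mu_phi : forall x, mu (phi x) = mu x).
Hypothesis s_phi : forall x, s (phi x) = ~~ s x.

Lemma sum_channel_flip (A : pred inp) (b : bool) :
  (forall x, A (phi x) = A x) ->
  \sum_(x | A x) mu x * kappa (s x) b
  = (\sum_(x | A x) mu x) * ((kappa true b + kappa false b) / 2).
Proof.
move=> A_phi.
have balanced : \sum_(x | A x && s x) mu x = \sum_(x | A x && ~~ s x) mu x.
  rewrite (reindex_inj (inv_inj phiK)) /=.
  by apply: eq_big => x; rewrite ?A_phi ?s_phi ?mu_phi.
rewrite (bigID s) [in RHS](bigID s) /=.
rewrite (eq_bigr (fun x => mu x * kappa true b)) => [|x /andP[_ ->] //].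
rewrite [X in _ + X](eq_bigr (fun x => mu x * kappa false b)) => [|x /andP[_]].
  by rewrite -!mulr_suml balanced; field.
by move/negbTE ->.
Qed.

Lemma indep_y_flip (T : eqType) (f : inp -> T) :
  (forall x, f (phi x) = f x) -> \sum_x mu x = 1 -> indep_y p f.
Proof.
move=> f_phi mu1 t b.
rewrite (Pr_fst_snd (fun x => f x == t)) (Pr_fst (fun x => f x == t)).
rewrite (Pr_fst_snd (fun _ => true)) !sum_channel_flip => [||x]; rewrite ?f_phi //.
by rewrite mu1 mul1r.
Qed.

End SourceFlip.

End Channel.

Definition src_idx (x : inp) : 'I_3 := if x (inord 2) then ord0 else inord 1.
Definition src (x : inp) : bool := x (src_idx x).
Definition flip_src (x : inp) : inp := [ffun i => x i (+) (i == src_idx x)].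
Definition bsc {R : numFieldType} (z y : bool) : R :=
  if y == z then 9 / 10 else 1 / 10.

Lemma src_idx_neq2 (x : inp) : (inord 2 == src_idx x) = false.
Proof. by rewrite /src_idx; case: (x _); rewrite -val_eqE /= !inordK. Qed.

Lemma src_idx_flip (x : inp) : src_idx (flip_src x) = src_idx x.
Proof. by rewrite {1}/src_idx ffunE src_idx_neq2 addbF. Qed.

Lemma src_flip (x : inp) : src (flip_src x) = ~~ src x.
Proof. by rewrite /src src_idx_flip ffunE eqxx addbT. Qed.

Lemma flip_srcK : involutive flip_src.
Proof.
by move=> x; apply/ffunP => i; rewrite !ffunE src_idx_flip -addbA addbb addbF.
Qed.

Lemma e_encodeE (x : inp) : e_encode x = [ffun i => i == src_idx x].
Proof.
rewrite /e_encode /src_idx; case: (x _); apply/ffunP => i.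
  by rewrite !ffunE.
by rewrite !ffunE -val_eqE /= inordK.
Qed.

Lemma expl_compl_flip (x : inp) :
  expl_compl e_encode (flip_src x) = expl_compl e_encode x.
Proof.
rewrite /expl_compl !e_encodeE src_idx_flip; congr pair.
by apply/ffunP => i; rewrite !ffunE; case: eqVneq => //= _; rewrite addbF.
Qed.

Lemma valE_single (j : 'I_3) (a : pvec) : valE ([ffun i => i == j], a) ord0 = a j.
Proof.
rewrite /valE ffunE /= (eq_filter (a2 := pred1 j)) => [|i]; last by rewrite ffunE.
by rewrite filter_pred1_uniq ?enum_uniq ?mem_enum.
Qed.

Lemma valE_expl_encode (x : inp) : valE (expl e_encode x) ord0 = Some (src x).
Proof. by rewrite /expl e_encodeE valE_single !ffunE eqxx. Qed.

Lemma pjointE (R : numFieldType) (x : inp) (y : bool) :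
  pjoint (x, y) = 8^-1 * bsc (src x) y :> R.
Proof. by rewrite /pjoint /bern_half /bsc /src /src_idx /=; case: (x _); field. Qed.

Lemma bsc1 (R : numFieldType) (z : bool) : bsc z true + bsc z false = 1 :> R.
Proof. by rewrite /bsc; case: z => /=; field. Qed.

Lemma sum_uniform (R : numFieldType) : \sum_(x : inp) 8^-1 = 1 :> R.
Proof.
by rewrite sumr_const card_ffun card_bool card_ord -[_ *+ _]mulr_natr mulVf // pnatr_eq0.
Qed.

Lemma pjoint_ge0 (R : realFieldType) (w : inp * bool) : 0 <= pjoint w :> R.
Proof. by case: w => x y; rewrite pjointE /bsc; case: ifP => _; lra. Qed.

Theorem proposition1 (R : realFieldType) :
  (* ROAR optimal: y independent of x_{-e_encode(x)} *)
  indep_y (@pjoint R) (expl_compl e_encode) /\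
  (* FRESH optimal: q(y | val(x_{e(x)})) = q(y | x) almost surely *)
  (forall (x : inp) (b : bool),
     0 < Pr (@pjoint R) (fun w => w.1 == x) ->
     cond_y (@pjoint R) (fun x' => valE (expl e_encode x')) x b
     = cond_y (@pjoint R) id x b).
Proof.
have channel := cond_y_channel (pjointE R) (bsc1 R).
split.
  exact: (indep_y_flip (mu := fun=> 8^-1) (pjointE R) (bsc1 R) flip_srcK
    (fun=> erefl) src_flip expl_compl_flip (sum_uniform R)).
move=> x b x_pos.
have val_src x' : valE (expl e_encode x') = valE (expl e_encode x) -> src x' = src x.
  by move/(congr1 (fun v : pvec => v ord0)); rewrite !valE_expl_encode => -[].
have val_pos : 0 < Pr (@pjoint R)
    (fun w => valE (expl e_encode w.1) == valE (expl e_encode x)).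
  by apply: lt_le_trans x_pos _; apply: Pr_le => [w|w /eqP ->//]; apply: pjoint_ge0.
by rewrite (channel _ _ _ _ val_src) ?(channel _ id) ?lt0r_neq0 // => x' ->.
Qed.
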